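(* Let $R$ be a simple ring, $\delta$ a derivation of $R$, and $S=R[x;\delta]$ the differential polynomial ring. If $S$ is left quasi-duo or right quasi-duo, then $R$ is a field and $\delta=0$.
   Context: All rings are unital and associative. A derivation of $R$ is an additive map $\delta:R\to R$ with $\delta(rs)=r\delta(s)+\delta(r)s$. The differential polynomial ring $R[x;\delta]$ is, as a left $R$-module, the polynomial ring $R[x]$, with multiplication determined by $xr=rx+\delta(r)$ for $r\in R$. A ring is left (right) quasi-duo if every maximal left (right) ideal is two-sided. *)

From HB Require Import structures.
From mathcomp Require Import all_boot all_order all_algebra.
Set Implicit Arguments. Unset Strict Implicit. Unset Printing Implicit Defensive.
Import GRing.Theory.
Local Open Scope ring_scope.

Section Ideals.
Variables (T : zmodType) (mul : T -> T -> T).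

Definition additive_subgroup (I : T -> Prop) :=
  [/\ I 0, forall a b, I a -> I b -> I (a + b) & forall a, I a -> I (- a)].

Definition left_ideal (I : T -> Prop) :=
  additive_subgroup I /\ forall s a, I a -> I (mul s a).

Definition right_ideal (I : T -> Prop) :=
  additive_subgroup I /\ forall s a, I a -> I (mul a s).

Definition two_sided_ideal (I : T -> Prop) := left_ideal I /\ right_ideal I.

Definition proper (I : T -> Prop) := exists t, ~ I t.

Definition maximal_left_ideal (I : T -> Prop) :=
  [/\ left_ideal I, proper I &
      forall J, left_ideal J -> (forall t, I t -> J t) ->
        (forall t, J t -> I t) \/ (forall t, J t)].

Definition maximal_right_ideal (I : T -> Prop) :=
  [/\ right_ideal I, proper I &
      forall J, right_ideal J -> (forall t, I t -> J t) ->
        (forall t, J t -> I t) \/ (forall t, J t)].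

Definition left_quasi_duo :=
  forall I, maximal_left_ideal I -> right_ideal I.
Definition right_quasi_duo :=
  forall I, maximal_right_ideal I -> left_ideal I.
End Ideals.

Definition simple_ring (R : nzRingType) :=
  forall I : R -> Prop, two_sided_ideal *%R I ->
    (forall x, I x -> x = 0) \/ (forall x, I x).

Definition derivation (R : nzRingType) (d : R -> R) :=
  (forall a b, d (a + b) = d a + d b) /\ (forall a b, d (a * b) = a * d b + d a * b).

Definition is_field (R : nzRingType) :=
  (forall a b : R, a * b = b * a) /\
  (forall a : R, a != 0 -> exists b, a * b = 1 /\ b * a = 1).

(* Multiplication of the differential polynomial ring R[x; d].
   Its carrier is {poly R} viewed as the left R-module with basis x^i
   (p = \sum_i p`_i x^i, coefficients on the left); the product is
   determined by x r = r x + d r, which gives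
   (a x^i)(b x^j) = \sum_(k <= i) 'C(i,k) a d^k(b) x^(i+j-k). *)
Definition dmul (R : nzRingType) (d : R -> R) (p q : {poly R}) : {poly R} :=
  \sum_(i < size p) \sum_(j < size q) \sum_(k < i.+1)
     ((p`_i * iter k d q`_j) *+ 'C(i, k)) *: 'X^(i + j - k).

From Pilot Require Import Defs.
From HB Require Import structures.
From mathcomp Require Import all_boot all_order all_algebra.
From mathcomp Require Import boolp.
From mathcomp Require classical_sets.
Set Implicit Arguments. Unset Strict Implicit. Unset Printing Implicit Defensive.
Import GRing.Theory.
Local Open Scope ring_scope.

(* In S = R[x; d] one has x r - r x = d r, and when d = 0 also
   (x - c) r - r (x - c) = r c - c r.  Each such g lies in a proper one-sided
   ideal (S x, x S, S (x - c) or (x - c) S), hence by Zorn's lemma in a maximal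
   one, which is two-sided because S is quasi-duo.  So the commutator g r - r g
   lies in M ∩ R, a proper two-sided ideal of the simple ring R, hence is 0.
   Thus d = 0 and R is commutative, and a commutative simple ring is a field. *)

Section Ideals.
Variables (T : zmodType) (mul : T -> T -> T).

Lemma left_ideal_range (f : T -> T) :
  zmod_morphism f -> (forall s p, mul s (f p) = f (mul s p)) ->
  left_ideal mul (fun t => exists p, t = f p).
Proof.
move=> fB fM; have f0 : f 0 = 0 by have := fB 0 0; rewrite !subrr.
have fN p : f (- p) = - f p by have := fB 0 p; rewrite f0 !sub0r.
split; [split|].
- by exists 0.
- by move=> _ _ [p ->] [q ->]; exists (p - - q); rewrite fB fN opprK.
- by move=> _ [p ->]; exists (- p).
- by move=> s _ [p ->]; exists (mul s p).
Qed.

Section MaximalLeftIdeal.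
Variables (one : T) (J : T -> Prop).
Hypotheses (mulr1 : forall t, mul t one = t)
  (LJ : left_ideal mul J) (nJ1 : ~ J one).

(* Zorn's lemma is applied to the sets A for which J ∪ A is a proper left
   ideal, so that the empty chain also has an upper bound. *)
Let proper_extension A :=
  left_ideal mul (fun t => J t \/ A t) /\ ~ (J one \/ A one).

Lemma proper_extension_chain (F : (T -> Prop) -> Prop) :
  (forall X, F X -> proper_extension X) ->
  (forall X Y, F X -> F Y -> (forall t, X t -> Y t) \/ (forall t, Y t -> X t)) ->
  proper_extension (fun t => exists2 X, F X & X t).
Proof.
move=> FP Ftot; set U := fun t => _.
have P0 : proper_extension (fun _ => False).
  split; last by case.
  rewrite (_ : (fun t => J t \/ False) = J) //.
  by apply: funext => t; apply: propext; split; [case | left].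
have common a b : J a \/ U a -> J b \/ U b -> exists2 Y, proper_extension Y &
    [/\ forall t, Y t -> U t, J a \/ Y a & J b \/ Y b].
  have inF X : F X -> forall t, X t -> U t by move=> FX t Xt; exists X.
  case=> [Ja|[X FX Xa]] [Jb|[Y FY Yb]].
  - by exists (fun _ => False) => //; split=> [t []||]; left.
  - by exists Y; [apply: FP | split; [apply: inF|left|right]].
  - by exists X; [apply: FP | split; [apply: inF|right|left]].
  - have [XY|YX] := Ftot X Y FX FY.
      by exists Y; [apply: FP | split; [apply: inF|right; apply: XY|right]].
    by exists X; [apply: FP | split; [apply: inF|right|right; apply: YX]].
split; [split; [split|]|].
- by left; case: LJ => -[].
- move=> a b Ha Hb; have [Y [[[_ YD _] _] _] [YU Ya Yb]] := common a b Ha Hb.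
  by case: (YD a b Ya Yb) => [|/YU]; [left|right].
- move=> a Ha; have [Y [[[_ _ YN] _] _] [YU Ya _]] := common a a Ha Ha.
  by case: (YN a Ya) => [|/YU]; [left|right].
- move=> s a Ha; have [Y [[_ YM] _] [YU Ya _]] := common a a Ha Ha.
  by case: (YM s a Ya) => [|/YU]; [left|right].
- by case=> [//|[X /FP[_ nX1] X1]]; apply: nX1; right.
Qed.

Lemma exists_maximal_left_ideal :
  exists2 M, maximal_left_ideal mul M & forall t, J t -> M t.
Proof.
have [A [[LM nM1] Amax]] : exists A, proper_extension A /\
    forall B, classical_sets.proper A B -> ~ proper_extension B.
  exact/classical_sets.Zorn_bigcup/proper_extension_chain.
exists (fun t => J t \/ A t); last by left.
split=> //; first by exists one.
move=> J' LJ' MJ'; have [J'1|nJ'1] := pselect (J' one).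
  by right=> t; rewrite -(mulr1 t); case: LJ' => _; apply.
left=> t J't; apply: contrapT => nMt; apply: (Amax J').
  by split=> [u Au|J'A]; [apply: MJ'; right | apply: nMt; right; apply: J'A].
rewrite /proper_extension (_ : (fun t => J t \/ J' t) = J').
  by split=> // -[J1|J'1]; apply: nJ'1; [apply: MJ'; left|].
apply: funext => u; apply: propext.
by split=> [[Ju|//]|]; [apply: MJ'; left | right].
Qed.

End MaximalLeftIdeal.
End Ideals.

Lemma right_ideal_range (T : zmodType) (mul : T -> T -> T) (f : T -> T) :
  zmod_morphism f -> (forall s p, mul (f p) s = f (mul p s)) ->
  right_ideal mul (fun t => exists p, t = f p).
Proof. exact: (left_ideal_range (mul := fun a b => mul b a)). Qed.

Lemma exists_maximal_right_ideal (T : zmodType) (mul : T -> T -> T) one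
    (J : T -> Prop) : (forall t, mul one t = t) ->
  right_ideal mul J -> ~ J one ->
  exists2 M, maximal_right_ideal mul M & forall t, J t -> M t.
Proof.
by move=> mul1r; apply: (exists_maximal_left_ideal (mul := fun a b => mul b a)).
Qed.

Section QuasiDuoPolynomials.
Variables (R : nzRingType) (mul : {poly R} -> {poly R} -> {poly R}).
Hypotheses (R_simple : simple_ring R)
  (mul_polyC : forall a b : R, mul a%:P b%:P = (a * b)%:P)
  (mulr1 : forall p, mul p 1 = p) (mul1r : forall p, mul 1 p = p).

Lemma two_sided_ideal_polyC_eq0 (M : {poly R} -> Prop) a :
  left_ideal mul M -> right_ideal mul M -> Defs.proper M -> M a%:P -> a = 0.
Proof.
move=> [[M0 MD MN] ML] [_ MR] [t nMt].
have ideal_R : two_sided_ideal *%R (fun a => M a%:P).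
  have add_R : additive_subgroup (fun a => M a%:P).
    split; first by rewrite polyC0.
      by move=> u v Mu Mv; rewrite polyCD; apply: MD.
    by move=> u Mu; rewrite polyCN; apply: MN.
  by split; split=> // s b Mb; rewrite -mul_polyC; [apply: ML|apply: MR].
case: (R_simple ideal_R) => [M0R /M0R //|M1 _].
by case: nMt; rewrite -(mulr1 t); apply: ML; rewrite -polyC1; apply: M1.
Qed.

Lemma two_sided_ideal_commutator_eq0 (M : {poly R} -> Prop) g r c :
  left_ideal mul M -> right_ideal mul M -> Defs.proper M -> M g ->
  mul g r%:P - mul r%:P g = c%:P -> c = 0.
Proof.
move=> LM RM PM Mg gr_c; apply: (two_sided_ideal_polyC_eq0 LM RM PM).
case: LM RM => [[_ MD MN] ML] [_ MR].
by rewrite -gr_c; apply: MD; [apply: MR | apply: MN; apply: ML].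
Qed.

Lemma left_quasi_duo_commutator_eq0 (J : {poly R} -> Prop) g r c :
  left_quasi_duo mul -> left_ideal mul J -> ~ J 1 -> J g ->
  mul g r%:P - mul r%:P g = c%:P -> c = 0.
Proof.
move=> LQ LJ nJ1 Jg; have [M maxM JM] := exists_maximal_left_ideal mulr1 LJ nJ1.
have [LM PM _] := maxM.
exact: (two_sided_ideal_commutator_eq0 LM (LQ M maxM) PM (JM g Jg)).
Qed.

Lemma right_quasi_duo_commutator_eq0 (J : {poly R} -> Prop) g r c :
  right_quasi_duo mul -> right_ideal mul J -> ~ J 1 -> J g ->
  mul g r%:P - mul r%:P g = c%:P -> c = 0.
Proof.
move=> RQ RJ nJ1 Jg; have [M maxM JM] := exists_maximal_right_ideal mul1r RJ nJ1.
have [RM PM _] := maxM.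
exact: (two_sided_ideal_commutator_eq0 (RQ M maxM) RM PM (JM g Jg)).
Qed.

End QuasiDuoPolynomials.

Lemma sum_coef_widen (R : nzSemiRingType) (V : nmodType) (G : R -> nat -> V)
    (p : {poly R}) n :
  (size p <= n)%N -> (forall i, G 0 i = 0) ->
  \sum_(i < size p) G p`_i i = \sum_(i < n) G p`_i i.
Proof.
move=> pn G0; rewrite (big_ord_widen n (fun i => G p`_i i) pn) big_mkcond.
by apply: eq_bigr => i _; case: ltnP => // /leq_sizeP ->.
Qed.

Lemma sum_binS (V : nmodType) (t : nat -> V) i :
  \sum_(k < i.+2) t k *+ 'C(i.+1, k) =
  \sum_(k < i.+1) t k *+ 'C(i, k) + \sum_(k < i.+1) t k.+1 *+ 'C(i, k).
Proof.
rewrite big_ord_recl [in RHS]big_ord_recl /= !bin0.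
under eq_bigr do rewrite binS mulrnDr.
rewrite big_split addrA; congr (_ + _ + _).
by rewrite big_ord_recr /= bin_small // addr0.
Qed.

Section DifferentialPolynomials.
Variables (R : nzRingType) (d : R -> R).
Hypothesis dD : derivation d.

Let d_is_zmod_morphism : zmod_morphism d.
Proof. by move=> a b; case: dD => dA _; apply: (addIr (d b)); rewrite -dA !subrK. Qed.
HB.instance Definition _ := GRing.isZmodMorphism.Build R R d d_is_zmod_morphism.

Lemma derivationM a b : d (a * b) = a * d b + d a * b. Proof. by case: dD. Qed.

Lemma derivation1 : d 1 = 0.
Proof. by apply: (addIr (d 1)); rewrite add0r -{3}(mulr1 1) derivationM mul1r mulr1. Qed.

Lemma iter_derivation0 k : iter k d 0 = 0.
Proof. by elim: k => //= k ->; rewrite raddf0. Qed.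

Lemma iter_derivation1 k : iter k.+1 d 1 = 0.
Proof. by elim: k => [|k IH]; [exact: derivation1 | rewrite iterS IH raddf0]. Qed.

Definition dmul_term (a : R) i (b : R) j : {poly R} :=
  \sum_(k < i.+1) ((a * iter k d b) *+ 'C(i, k)) *: 'X^(i + j - k).

Lemma dmul_term0l i b j : dmul_term 0 i b j = 0.
Proof. by apply: big1 => k _; rewrite mul0r mul0rn scale0r. Qed.

Lemma dmul_term0r a i j : dmul_term a i 0 j = 0.
Proof. by apply: big1 => k _; rewrite iter_derivation0 mulr0 mul0rn scale0r. Qed.

Lemma dmul_termDl a a' i b j :
  dmul_term (a + a') i b j = dmul_term a i b j + dmul_term a' i b j.
Proof. by rewrite -big_split; apply: eq_bigr => k _; rewrite mulrDl mulrnDl scalerDl. Qed.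

Lemma dmul_termSr a i b j : dmul_term a i b j.+1 = dmul_term a i b j * 'X.
Proof.
rewrite /dmul_term mulr_suml; apply: eq_bigr => k _.
by rewrite -scalerAl -exprSr addnS subSn // (leq_trans (ltnSE (ltn_ord k))) ?leq_addr.
Qed.

Lemma dmul_widen n m (p q : {poly R}) : (size p <= n)%N -> (size q <= m)%N ->
  dmul d p q = \sum_(i < n) \sum_(j < m) dmul_term p`_i i q`_j j.
Proof.
move=> pn qm; pose G a i := \sum_(j < size q) dmul_term a i q`_j j.
rewrite [LHS](_ : _ = \sum_(i < size p) G p`_i i) //.
rewrite (sum_coef_widen (G := G) pn) => [|i]; last first.
  by apply: big1 => j _; apply: dmul_term0l.
apply: eq_bigr => i _; rewrite /G (sum_coef_widen (G := dmul_term _ i) qm) // => j.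
exact: dmul_term0r.
Qed.

Lemma dmulDl (p p' q : {poly R}) : dmul d (p + p') q = dmul d p q + dmul d p' q.
Proof.
pose n := maxn (size p) (size p').
rewrite !(@dmul_widen n (size q)) // ?leq_maxl ?leq_maxr ?size_polyD //.
rewrite -big_split; apply: eq_bigr => i _; rewrite -big_split.
by apply: eq_bigr => j _; rewrite coefD dmul_termDl.
Qed.

Lemma dmul_polyC a b : dmul d a%:P b%:P = (a * b)%:P.
Proof.
rewrite (@dmul_widen 1 1) ?size_polyC_leq1 // !big_ord1 /dmul_term big_ord1 /=.
by rewrite !coefC mulr1n expr0 alg_polyC.
Qed.

Lemma dmul_commutator_X r : dmul d 'X r%:P - dmul d r%:P 'X = (d r)%:P.
Proof.
rewrite (@dmul_widen 2 1) ?size_polyX ?size_polyC_leq1 //.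
rewrite (@dmul_widen 1 2) ?size_polyX ?size_polyC_leq1 //.
rewrite !big_ord_recl !big_ord0 !coefX !coefC /= dmul_term0l dmul_term0r.
rewrite /dmul_term !big_ord_recl !big_ord0 /bump /= !(addr0, add0r).
by rewrite !(mul1r, mulr1, mulr1n) expr0 alg_polyC addrAC subrr add0r.
Qed.

Lemma dmul1r p : dmul d 1 p = p.
Proof.
rewrite (@dmul_widen 1 (size p)) ?size_poly1 // big_ord1 -[RHS]coefK poly_def.
apply: eq_bigr => j _; rewrite /dmul_term big_ord1 coef1 /=.
by rewrite bin0 mul1r mulr1n add0n subn0.
Qed.

Lemma dmulr1 p : dmul d p 1 = p.
Proof.
rewrite (@dmul_widen (size p) 1) ?size_poly1 // -[RHS]coefK poly_def.
apply: eq_bigr => i _; rewrite big_ord1 /dmul_term big_ord_recl big1 ?addr0 /=.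
  by rewrite coef1 bin0 mulr1 mulr1n addn0 subn0.
by move=> k _; rewrite coef1 /= -iterS iter_derivation1 mulr0 mul0rn scale0r.
Qed.

Lemma dmulMX s p : dmul d s (p * 'X) = dmul d s p * 'X.
Proof.
rewrite (@dmul_widen (size s) (size p).+1) //; last first.
  by rewrite (leq_trans (size_polyMleq _ _)) // size_polyX addn2.
rewrite (@dmul_widen (size s) (size p)) // mulr_suml; apply: eq_bigr => i _.
rewrite big_ord_recl coefMX /= dmul_term0r add0r mulr_suml.
by apply: eq_bigr => j _; rewrite coefMX /= dmul_termSr.
Qed.

(* Left multiplication by x in R[x; d], since x (b x^j) = b x^(j+1) + d(b) x^j. *)
Definition xmul (p : {poly R}) : {poly R} := p * 'X + map_poly d p.

Lemma xmul_is_zmod_morphism : zmod_morphism xmul.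
Proof. by move=> p q; rewrite /xmul mulrBl raddfB opprD addrACA. Qed.
HB.instance Definition _ := GRing.isZmodMorphism.Build _ _ xmul xmul_is_zmod_morphism.

Lemma xmul1 : xmul 1 = 'X.
Proof. by rewrite /xmul mul1r -polyC1 map_polyC /= derivation1 addr0. Qed.

Lemma size_xmul p : p != 0 -> size (xmul p) = (size p).+1.
Proof. by move=> p0; rewrite /xmul size_polyDl size_mulX // ltnS size_poly. Qed.

Lemma xmulZXn c e : xmul (c *: 'X^e) = c *: 'X^(e.+1) + d c *: 'X^e.
Proof.
rewrite /xmul -scalerAl -exprSr; congr (_ + _); apply/polyP => n.
by rewrite coef_map !coefZ coefXn; case: eqP; rewrite ?mulr1 ?mulr0 ?raddf0.
Qed.

Lemma xmul_dmul_term a i b j :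
  xmul (dmul_term a i b j) = dmul_term a i.+1 b j + dmul_term (d a) i b j.
Proof.
pose t k := (a * iter k d b) *: 'X^(i.+1 + j - k).
have -> : dmul_term a i.+1 b j = \sum_(k < i.+2) t k *+ 'C(i.+1, k).
  by apply: eq_bigr => k _; rewrite scalerMnl.
rewrite sum_binS /dmul_term raddf_sum -big_split -big_split /=.
apply: eq_bigr => k _.
rewrite /t xmulZXn raddfMn /= derivationM mulrnDl scalerDl addrA -iterS -!scalerMnl.
by rewrite addSn subSS subSn // (leq_trans (ltnSE (ltn_ord k))) ?leq_addr.
Qed.

Lemma dmul_xmul p s : dmul d (xmul p) s = xmul (dmul d p s).
Proof.
rewrite [in LHS]/xmul dmulDl.
rewrite (@dmul_widen (size p).+1 (size s) (p * 'X)) //; last first.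
  by rewrite (leq_trans (size_polyMleq _ _)) // size_polyX addn2.
rewrite big_ord_recl big1 ?add0r => [|j _]; last by rewrite coefMX dmul_term0l.
rewrite (@dmul_widen (size p) (size s) (map_poly d p)) ?size_poly //.
rewrite (@dmul_widen (size p) (size s) p) // !raddf_sum -big_split.
apply: eq_bigr => i _; rewrite raddf_sum -big_split; apply: eq_bigr => j _.
by rewrite coefMX coef_map /= xmul_dmul_term.
Qed.

Lemma dmul_eq_mul : (forall r, d r = 0) -> forall p q, dmul d p q = p * q.
Proof.
move=> d0 p q; rewrite (@dmul_widen (size p) (size q)) //.
have -> : p * q = (\sum_(i < size p) p`_i *: 'X^i) * (\sum_(j < size q) q`_j *: 'X^j).
  by rewrite -!poly_def !coefK.
rewrite mulr_suml; apply: eq_bigr => i _.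
rewrite mulr_sumr; apply: eq_bigr => j _.
rewrite /dmul_term big_ord_recl big1 => [|k _]; last first.
  by rewrite /= d0 mulr0 mul0rn scale0r.
rewrite addr0 /= bin0 mulr1n subn0 -!mul_polyC mulrA -[_ * 'X^i * _]mulrA.
by rewrite -commr_polyXn mulrA -polyCM -mulrA -exprD.
Qed.

End DifferentialPolynomials.

Lemma one_notin_range (R : nzRingType) (f : {poly R} -> {poly R}) :
  f 0 = 0 -> (forall p, p != 0 -> size (f p) = (size p).+1) ->
  ~ exists p, 1 = f p.
Proof.
move=> f0 fS [p]; have [->|p0] := eqVneq p 0.
  by rewrite f0; apply/eqP; exact: oner_neq0.
move/(congr1 (fun q : {poly R} => size q)); rewrite size_poly1 fS // => -[/eqP].
by rewrite eq_sym size_poly_eq0 (negbTE p0).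
Qed.

Lemma quasi_duo_derivation_eq0 (R : nzRingType) (d : R -> R) :
  simple_ring R -> derivation d ->
  left_quasi_duo (dmul d) \/ right_quasi_duo (dmul d) -> forall r, d r = 0.
Proof.
move=> simpleR dD QD r; have commX := dmul_commutator_X dD r.
case: QD => [LQ|RQ].
- pose J (p : {poly R}) := exists q, p = q * 'X.
  apply: (left_quasi_duo_commutator_eq0 (J := J) simpleR (dmul_polyC dD)
    (dmulr1 dD) LQ _ _ _ commX).
  + apply: left_ideal_range => [p q|s p]; [exact: mulrBl | exact: dmulMX].
  + by apply: one_notin_range => [|p]; [exact: mul0r | exact: size_mulX].
  + by exists 1; rewrite mul1r.
- pose J (p : {poly R}) := exists q, p = xmul d q.
  apply: (right_quasi_duo_commutator_eq0 (J := J) simpleR (dmul_polyC dD)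
    (dmulr1 dD) (dmul1r dD) RQ _ _ _ commX).
  + apply: right_ideal_range => [|s p].
      exact: xmul_is_zmod_morphism.
    exact: dmul_xmul.
  + by apply: one_notin_range => [|p]; [exact: raddf0 | exact: size_xmul].
  + by exists 1; rewrite xmul1.
Qed.

Lemma XsubC_commutator (R : nzRingType) (c r : R) :
  ('X - c%:P) * r%:P - r%:P * ('X - c%:P) = (r * c - c * r)%:P.
Proof.
by rewrite mulrBl mulrBr -!polyCM commr_polyX opprB addrC addrA subrK polyCB.
Qed.

Lemma quasi_duo_poly_comm (R : nzRingType) : simple_ring R ->
  left_quasi_duo (@GRing.mul {poly R}) \/ right_quasi_duo (@GRing.mul {poly R}) ->
  forall a b : R, a * b = b * a.
Proof.
move=> simpleR QD a c; apply/eqP; rewrite -subr_eq0; apply/eqP.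
have mul_polyC x y : (x%:P * y%:P : {poly R}) = (x * y)%:P by rewrite polyCM.
have commXc := XsubC_commutator c a.
have monic_Xc := monicXsubC c.
case: QD => [LQ|RQ].
- pose J (p : {poly R}) := exists q, p = q * ('X - c%:P).
  apply: (left_quasi_duo_commutator_eq0 (J := J) simpleR mul_polyC (@mulr1 _)
    LQ _ _ _ commXc).
  + apply: left_ideal_range => [p q|s p]; [exact: mulrBl | exact: mulrA].
  + apply: one_notin_range => [|p p0]; first exact: mul0r.
    by rewrite size_Mmonic // size_XsubC addn2.
  + by exists 1; rewrite mul1r.
- pose J (p : {poly R}) := exists q, p = ('X - c%:P) * q.
  apply: (right_quasi_duo_commutator_eq0 (J := J) simpleR mul_polyC (@mulr1 _)
    (@mul1r _) RQ _ _ _ commXc).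
  + apply: right_ideal_range => [p q|s p]; [exact: mulrBr | exact/esym/mulrA].
  + apply: one_notin_range => [|p p0]; first exact: mulr0.
    by rewrite size_monicM // size_XsubC add2n.
  + by exists 1; rewrite mulr1.
Qed.

Lemma simple_comm_is_field (R : nzRingType) :
  simple_ring R -> (forall a b : R, a * b = b * a) -> is_field R.
Proof.
move=> simpleR mulC; split=> // a a0.
have ideal_aR : two_sided_ideal *%R (fun x => exists b, x = a * b).
  have add_aR : additive_subgroup (fun x => exists b, x = a * b).
    split; first by exists 0; rewrite mulr0.
      by move=> _ _ [b ->] [b' ->]; exists (b + b'); rewrite mulrDr.
    by move=> _ [b ->]; exists (- b); rewrite mulrN.
  split; split=> // s _ [b ->]; last by exists (b * s); rewrite mulrA.
  by exists (s * b); rewrite mulrA (mulC s a) mulrA.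
case: (simpleR _ ideal_aR) => [/(_ a) a_eq0|/(_ 1) [b ab1]].
  by move: a0; rewrite a_eq0 ?eqxx //; exists 1; rewrite mulr1.
by exists b; rewrite -ab1 mulC.
Qed.

Unset Implicit Arguments.
Theorem lemma2p1 (R : nzRingType) (d : R -> R) :
  simple_ring R -> derivation d ->
  (left_quasi_duo (dmul d) \/ right_quasi_duo (dmul d)) ->
  is_field R /\ (forall r, d r = 0).
Proof.
move=> simpleR dD QD; have d_eq0 := quasi_duo_derivation_eq0 simpleR dD QD.
have dmulE : dmul d = *%R.
  by apply: funext => p; apply: funext => q; exact: dmul_eq_mul.
rewrite dmulE in QD.
by split=> //; apply: simple_comm_is_field simpleR (quasi_duo_poly_comm simpleR QD).
Qed.
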